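(* Let $\mathsf V$ be a quantale, $X=(X,a)$ a $\mathsf V$-category, and let $\varphi:E\rightharpoonup X$, $\psi:X\rightharpoonup E$ be $\mathsf V$-modules with $\varphi\dashv\psi$. Then $\psi^*=\psi\cdot\mathrm y_X^*$ and $\psi_*=(\mathrm y_X)_*\cdot\varphi$; explicitly, for every $h\in[X^{\mathrm{op}},\mathsf V]$, $[h,\psi]=\bigvee_{x\in X}[h,x^*]\otimes\psi(x)$ and $[\psi,h]=\bigvee_{x\in X}\varphi(x)\otimes[x^*,h]$.
   Context: A quantale $(\mathsf V,\otimes,k)$ is a complete anti-symmetric lattice with an associative, commutative operation $\otimes$ with neutral element $k$ distributing over arbitrary suprema; $\hom(u,-)$ is the right adjoint of $u\otimes-$. A $\mathsf V$-category $(X,a)$ is a set with $a:X\times X\to\mathsf V$ such that $k\le a(x,x)$ and $a(x,y)\otimes a(y,z)\le a(x,z)$. A $\mathsf V$-module $\varphi:(X,a)\rightharpoonup(Y,b)$ is a map $X\times Y\to\mathsf V$ with $a(x,x')\otimes\varphi(x',y)\le\varphi(x,y)$ and $\varphi(x,y)\otimes b(y,y')\le\varphi(x,y')$; composition $(\psi\cdot\varphi)(x,z)=\bigvee_y\varphi(x,y)\otimes\psi(y,z)$; $\varphi\dashv\psi$ means $a\le\psi\cdot\varphi$ and $\varphi\cdot\psi\le b$. $E=(\{\star\},k)$; modules $E\rightharpoonup X$ and $X\rightharpoonup E$ are identified with maps $X\to\mathsf V$. $[X^{\mathrm{op}},\mathsf V]$ is the $\mathsf V$-category of modules $X\rightharpoonup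 E$ with $[h,h']=\bigwedge_x\hom(h(x),h'(x))$. For a $\mathsf V$-functor $f:(X,a)\to(Y,b)$, $f_*(x,y)=b(f(x),y)$ and $f^*(y,x)=b(y,f(x))$. $\mathrm y_X:X\to[X^{\mathrm{op}},\mathsf V]$, $x\mapsto x^*$ with $x^*(y)=a(y,x)$, is the Yoneda embedding. An element $\psi\in[X^{\mathrm{op}},\mathsf V]$ is regarded as a $\mathsf V$-functor $E\to[X^{\mathrm{op}},\mathsf V]$, giving $\psi_*:E\rightharpoonup[X^{\mathrm{op}},\mathsf V]$, $h\mapsto[\psi,h]$, and $\psi^*:[X^{\mathrm{op}},\mathsf V]\rightharpoonup E$, $h\mapsto[h,\psi]$. *)

Set Implicit Arguments.

Record quantale := Quantale {
  qcar :> Type;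
  qle : qcar -> qcar -> Prop;
  qle_refl : forall u, qle u u;
  qle_trans : forall u v w, qle u v -> qle v w -> qle u w;
  qle_antisym : forall u v, qle u v -> qle v u -> u = v;
  qsup : (qcar -> Prop) -> qcar;
  qsup_ub : forall (S : qcar -> Prop) u, S u -> qle u (qsup S);
  qsup_least : forall (S : qcar -> Prop) v, (forall u, S u -> qle u v) -> qle (qsup S) v;
  qtens : qcar -> qcar -> qcar;
  qk : qcar;
  qtens_assoc : forall u v w, qtens u (qtens v w) = qtens (qtens u v) w;
  qtens_comm : forall u v, qtens u v = qtens v u;
  qtens_k : forall u, qtens qk u = u;
  qtens_sup : forall u (S : qcar -> Prop),
      qtens u (qsup S) = qsup (fun v => exists w, S w /\ v = qtens u w);
  qhom : qcar -> qcar -> qcar;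
  qhom_adj : forall u v w, qle (qtens u v) w <-> qle v (qhom u w)
}.

Arguments qle {q} _ _.
Arguments qsup {q} _.
Arguments qtens {q} _ _.
Arguments qk {q}.
Arguments qhom {q} _ _.


Definition supI {V : quantale} (I : Type) (f : I -> V) : V := qsup (q:=V) (fun v => exists i, v = f i).
Definition qinf {V : quantale} (S : V -> Prop) : V := qsup (q:=V) (fun v => forall u, S u -> qle v u).
Definition infI {V : quantale} (I : Type) (f : I -> V) : V := qinf (fun v => exists i, v = f i).

Definition is_Vcat {V : quantale} (X : Type) (a : X -> X -> V) : Prop :=
  (forall x, qle qk (a x x)) /\
  (forall x y z, qle (qtens (a x y) (a y z)) (a x z)).

(** V-modules E -/-> X, identified with maps X -> V (phi y = phi(star,y)). *)
Definition is_mod_EX {V : quantale} (X : Type) (a : X -> X -> V) (phi : X -> V) : Prop :=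
  forall y y', qle (qtens (phi y) (a y y')) (phi y').

(** V-modules X -/-> E, identified with maps X -> V (psi x = psi(x,star));
    these are the elements of [X^op, V]. *)
Definition is_mod_XE {V : quantale} (X : Type) (a : X -> X -> V) (psi : X -> V) : Prop :=
  forall x x', qle (qtens (a x x') (psi x')) (psi x).

(** phi -| psi for phi : E -/-> X and psi : X -/-> E:
    k <= (psi . phi)(star,star) and (phi . psi)(x,y) <= a(x,y). *)
Definition mod_adj {V : quantale} (X : Type) (a : X -> X -> V) (phi psi : X -> V) : Prop :=
  qle qk (supI (fun x => qtens (phi x) (psi x))) /\
  (forall x y, qle (qtens (psi x) (phi y)) (a x y)).

Definition pshom {V : quantale} (X : Type) (h h' : X -> V) : V :=
  infI (fun x => qhom (h x) (h' x)).

Definition yon {V : quantale} (X : Type) (a : X -> X -> V) (x : X) : X -> V := fun y => a y x.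

(** The adjunction [phi -| psi] makes [psi] behave like a representable: its
    counit gives [phi x <= [psi, x^*]] and, [psi] being a module, Yoneda gives
    [psi x <= [x^*, psi]].  Composition in [[X^op, V]] then yields the
    inequalities [<=] from right to left.  For the others, the unit
    [k <= \/_x phi x (x) psi x] expands a hom [t] into [\/_x t (x) phi x (x) psi x],
    and one of the two bounds above absorbs [t] into a hom through [x^*]. *)

Arguments qle_refl {q} u.
Arguments qle_trans {q} u v w.
Arguments qle_antisym {q} u v.
Arguments qsup_ub {q} S u.
Arguments qsup_least {q} S v.
Arguments qtens_assoc {q} u v w.
Arguments qtens_comm {q} u v.
Arguments qtens_k {q} u.
Arguments qtens_sup {q} u S.
Arguments qhom_adj {q} u v w.

Section Quantale.
Variable V : quantale.

Lemma qtens_monor (w u v : V) : qle u v -> qle (qtens w u) (qtens w v).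
Proof.
intro Huv.
assert (Hv : v = qsup (fun z => z = u \/ z = v)).
{ apply qle_antisym.
  - apply qsup_ub; auto.
  - apply qsup_least; intros z [-> | ->]; [exact Huv | apply qle_refl]. }
rewrite Hv, qtens_sup; apply qsup_ub; exists u; auto.
Qed.

Lemma qtens_monol (w u v : V) : qle u v -> qle (qtens u w) (qtens v w).
Proof. intro Huv; rewrite !(qtens_comm _ w); apply qtens_monor, Huv. Qed.

Lemma supI_ub (I : Type) (f : I -> V) i : qle (f i) (supI f).
Proof. apply qsup_ub; eauto. Qed.

Lemma supI_least (I : Type) (f : I -> V) c :
  (forall i, qle (f i) c) -> qle (supI f) c.
Proof. intro Hf; apply qsup_least; intros u [i ->]; auto. Qed.

Lemma supI_mono (I : Type) (f g : I -> V) :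
  (forall i, qle (f i) (g i)) -> qle (supI f) (supI g).
Proof.
intro Hfg; apply supI_least; intro i.
apply qle_trans with (g i); [apply Hfg | apply supI_ub].
Qed.

Lemma infI_lb (I : Type) (f : I -> V) i : qle (infI f) (f i).
Proof. apply qsup_least; intros u Hu; apply Hu; eauto. Qed.

Lemma infI_glb (I : Type) (f : I -> V) c :
  (forall i, qle c (f i)) -> qle c (infI f).
Proof. intro Hf; apply qsup_ub; intros u [i ->]; auto. Qed.

Lemma qtens_supI (I : Type) (t : V) (f : I -> V) :
  qle (qtens t (supI f)) (supI (fun i => qtens t (f i))).
Proof.
unfold supI; rewrite qtens_sup; apply qsup_least.
intros v [w [[i ->] ->]]; apply qsup_ub; eauto.
Qed.

Lemma qtens_unit_le (t s : V) : qle qk s -> qle t (qtens t s).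
Proof.
intro Hs; rewrite (qtens_comm t).
apply qle_trans with (qtens qk t); [rewrite qtens_k; apply qle_refl | apply qtens_monol, Hs].
Qed.

Section Presheaves.
Variable X : Type.

Lemma pshom_eval (h g : X -> V) y : qle (qtens (h y) (pshom h g)) (g y).
Proof. apply qhom_adj; apply (infI_lb _ (fun x => qhom (h x) (g x))). Qed.

Lemma pshom_intro (h g : X -> V) w :
  (forall y, qle (qtens (h y) w) (g y)) -> qle w (pshom h g).
Proof. intro Hw; apply infI_glb; intro y; apply qhom_adj, Hw. Qed.

Lemma pshom_comp (h g f : X -> V) :
  qle (qtens (pshom h g) (pshom g f)) (pshom h f).
Proof.
apply pshom_intro; intro y; rewrite qtens_assoc.
apply qle_trans with (qtens (g y) (pshom g f)).
- apply qtens_monol, pshom_eval.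
- apply pshom_eval.
Qed.

Variable a : X -> X -> V.

Lemma mod_XE_le_pshom_yon (psi : X -> V) x :
  is_mod_XE a psi -> qle (psi x) (pshom (yon a x) psi).
Proof. intro Hpsi; apply pshom_intro; intro y; apply Hpsi. Qed.

Section Adjunction.
Variables phi psi : X -> V.
Hypothesis Hpsi : is_mod_XE a psi.
Hypothesis Hunit : qle qk (supI (fun x => qtens (phi x) (psi x))).
Hypothesis Hcounit : forall x y, qle (qtens (psi x) (phi y)) (a x y).

Lemma ladj_le_pshom_yon x : qle (phi x) (pshom psi (yon a x)).
Proof. apply pshom_intro; intro y; apply Hcounit. Qed.

Lemma pshom_expand_unit (t : V) :
  qle t (supI (fun x => qtens t (qtens (phi x) (psi x)))).
Proof.
apply qle_trans with (qtens t (supI (fun x => qtens (phi x) (psi x)))).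
- apply qtens_unit_le, Hunit.
- apply qtens_supI.
Qed.

Lemma pshom_to_radj (h : X -> V) :
  pshom h psi = supI (fun x => qtens (pshom h (yon a x)) (psi x)).
Proof.
apply qle_antisym.
- eapply qle_trans; [apply pshom_expand_unit | apply supI_mono; intro x].
  rewrite qtens_assoc; apply qtens_monol.
  eapply qle_trans; [apply qtens_monor, ladj_le_pshom_yon | apply pshom_comp].
- apply supI_least; intro x.
  eapply qle_trans; [apply qtens_monor, mod_XE_le_pshom_yon, Hpsi | apply pshom_comp].
Qed.

Lemma pshom_from_radj (h : X -> V) :
  pshom psi h = supI (fun x => qtens (phi x) (pshom (yon a x) h)).
Proof.
apply qle_antisym.
- eapply qle_trans; [apply pshom_expand_unit | apply supI_mono; intro x].
  rewrite (qtens_comm (pshom psi h)), <- qtens_assoc; apply qtens_monor.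
  eapply qle_trans; [apply qtens_monol, mod_XE_le_pshom_yon, Hpsi | apply pshom_comp].
- apply supI_least; intro x.
  eapply qle_trans; [apply qtens_monol, ladj_le_pshom_yon | apply pshom_comp].
Qed.

End Adjunction.
End Presheaves.
End Quantale.

Theorem lemma1p6 (V : quantale) (X : Type) (a : X -> X -> V)
    (phi psi : X -> V) :
  is_Vcat a ->
  is_mod_EX a phi ->
  is_mod_XE a psi ->
  mod_adj a phi psi ->
  forall h : X -> V, is_mod_XE a h ->
    pshom h psi = supI (fun x => qtens (pshom h (yon a x)) (psi x)) /\
    pshom psi h = supI (fun x => qtens (phi x) (pshom (yon a x) h)).
Proof.
intros _ _ Hpsi [Hunit Hcounit] h _.
split; [eapply pshom_to_radj | eapply pshom_from_radj]; eassumption.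
Qed.
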